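(* For every constant $\alpha>1$, any stable approximation scheme (SAS) for the dynamic broadcast range-assignment problem in $\mathbb{R}^1$ with distance-power gradient $\alpha$ must have stability parameter $k(\varepsilon)=\Omega\big((1/\varepsilon)^{1/(\alpha-1)}\big)$.
   Context: Broadcast range-assignment problem: $P$ is a finite set of points in $\mathbb{R}^1$ containing a designated source $s$. A range assignment $\rho$ gives each $p\in P$ a range $\rho(p)\ge 0$; it induces the directed communication graph on $P$ with an edge $(p,q)$ iff $|pq|\le\rho(p)$. The assignment is feasible if this graph contains an arborescence rooted at $s$ spanning $P$. Its cost is $\sum_{p\in P}\rho(p)^\alpha$, $\alpha>1$; $\mathrm{OPT}(P)$ is the minimum cost of a feasible assignment. In the dynamic version, points other than $s$ are inserted into and deleted from $P$. An update algorithm, given the current assignment and the update, outputs a feasible assignment for the updated set. The range of a point not in the current set is $0$. An update algorithm is $k$-stable if each insertion or deletion modifies at most $k$ ranges. A stable approximation scheme (SAS) is an update algorithm that, for any given fixed $\varepsilon>0$, is $k(\varepsilon)$-stable and after every update has cost at most $(1+\varepsilon)\mathrm{OPT}(P)$, where $k(\varepsilon)$ depends only on $\varepsilon$ and not on $|P|$. *)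

From HB Require Import structures.
From mathcomp Require Import all_boot all_order all_algebra.
From mathcomp Require Import finmap.
From mathcomp Require Import all_classical all_reals all_analysis.
Set Implicit Arguments. Unset Strict Implicit. Unset Printing Implicit Defensive.
Import Order.TTheory GRing.Theory Num.Theory.
Local Open Scope ring_scope.
Local Open Scope fset_scope.

Section Broadcast.
Variable R : realType.

Definition range_assignment (P : {fset R}) (rho : R -> R) : Prop :=
  (forall p, 0 <= rho p) /\ (forall p, p \notin P -> rho p = 0).

(* The communication graph has an edge (p,q) (p,q in P) iff |p - q| <= rho p.
   A spanning arborescence rooted at s is given by a parent map [par]:
   every p in P other than s has its parent par p in P with an edge
   (par p, p), and following parents from any p in P leads to s. *)
Definition has_arborescence (s : R) (P : {fset R}) (rho : R -> R) : Prop :=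
  exists par : R -> R,
    (forall p, p \in P -> p != s ->
        par p \in P /\ `|par p - p| <= rho (par p)) /\
    (forall p, p \in P -> exists n : nat, iter n par p = s).

Definition feasible (s : R) (P : {fset R}) (rho : R -> R) : Prop :=
  range_assignment P rho /\ has_arborescence s P rho.

Definition cost (alpha : R) (P : {fset R}) (rho : R -> R) : R :=
  \sum_(p <- P) (rho p) `^ alpha.

Definition OPT (s alpha : R) (P : {fset R}) : R :=
  inf [set cost alpha P rho | rho in [set rho | feasible s P rho]].

Inductive update := Ins of R | Del of R.

Definition valid_update (s : R) (P : {fset R}) (u : update) : Prop :=
  match u with
  | Ins x => x \notin P
  | Del x => x \in P /\ x != s
  end.

Definition apply_update (P : {fset R}) (u : update) : {fset R} :=
  match u with
  | Ins x => x |` P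
  | Del x => P `\ x
  end.

Definition update_algorithm := {fset R} -> (R -> R) -> update -> (R -> R).

Inductive reachable (s : R) (A : update_algorithm) :
    {fset R} -> (R -> R) -> Prop :=
  | reach_init : reachable s A [fset s] (fun _ => 0)
  | reach_step P rho u : reachable s A P rho -> valid_update s P u ->
      reachable s A (apply_update P u) (A P rho u).

Definition modifies_at_most (k : nat) (rho rho' : R -> R) : Prop :=
  exists D : {fset R}, (#|` D| <= k)%N /\ (forall p, p \notin D -> rho' p = rho p).

Definition stable_approx (s alpha eps : R) (k : nat) (A : update_algorithm)
    : Prop :=
  forall P rho u, reachable s A P rho -> valid_update s P u ->
    let P' := apply_update P u in
    let rho' := A P rho u in
    [/\ feasible s P' rho',
        modifies_at_most k rho rho' &
        cost alpha P' rho' <= (1 + eps) * OPT s alpha P'].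

Definition SAS (s alpha : R) (A : R -> update_algorithm) (k : R -> nat) : Prop :=
  forall eps, 0 < eps -> stable_approx s alpha eps (k eps) (A eps).

End Broadcast.

From HB Require Import structures.
From mathcomp Require Import all_boot all_order all_algebra.
From mathcomp Require Import finmap.
From mathcomp Require Import all_classical all_reals all_analysis.
From mathcomp Require Import ring lra.
Import Order.TTheory GRing.Theory Num.Theory.
Local Open Scope fset_scope.
Local Open Scope ring_scope.

(* Insert s + 1, ..., s + n: the chain with unit ranges shows OPT <= n, so the
   scheme holds an assignment rho of cost <= (1 + eps) n.  Now insert s - n.
   A star of radius n around s shows OPT <= n^alpha, and any feasible
   assignment gives some chain point a range >= n, so after this update the
   chain points other than that one cost at most eps n^alpha together.
   In rho, every gap [s + i, s + i + 1] is jumped over by an edge leaving some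
   s + j with j <= i; if s + j jumps over c gaps then c <= rho(s + j) and, as
   x^alpha is superlinear, rho(s + j)^alpha exceeds c by (2^(alpha-1) - 1)(c - 1).
   The total excess is at most eps n, hence
     n <= #changed + eps n / (2^(alpha-1) - 1) + eps n^alpha,
   and n ~ (4 eps)^(-1/(alpha-1)) forces k + 1 >= #changed >= n / 2. *)

Section PowerCost.
Context {R : realType}.

Definition convexity_gain (alpha : R) : R := 2 `^ (alpha - 1) - 1.

Lemma convexity_gain_gt0 (alpha : R) : 1 < alpha -> 0 < convexity_gain alpha.
Proof.
move=> a1; rewrite /convexity_gain subr_gt0.
by have := @gt0_ltr_powR R (alpha - 1) _ 1 2; rewrite powR1 => -> //; rewrite ?nnegrE; lra.
Qed.

Lemma natr_le_powR (alpha r : R) (c : nat) : 1 <= alpha -> c%:R <= r -> c%:R <= r `^ alpha.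
Proof.
move=> a1 cr; case: c cr => [|c] cr; first exact: powR_ge0.
have r1 : 1 <= r by apply: le_trans cr; rewrite ler1n.
by apply: le_trans cr _; apply: le1r_powR.
Qed.

Lemma natr_le_cost_excess (alpha r : R) (c : nat) : 1 < alpha -> c%:R <= r ->
  c%:R <= 1 + (r `^ alpha - c%:R) / convexity_gain alpha.
Proof.
move=> a1 cr; have d0 := convexity_gain_gt0 _ a1.
have r0 : 0 <= r := le_trans (ler0n _ _) cr.
have cpow : c%:R <= r `^ alpha by apply: natr_le_powR => //; lra.
have excess0 : 0 <= (r `^ alpha - c%:R) / convexity_gain alpha.
  by apply: divr_ge0; [rewrite subr_ge0 | exact: ltW].
have [c_le1|c_gt1] := leqP c 1.
  have : c%:R <= 1 :> R by rewrite lern1.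
  lra.
have gain : c%:R * 2 `^ (alpha - 1) <= r `^ alpha.
  apply: le_trans (_ : c%:R `^ alpha <= _); last first.
    by apply: ge0_ler_powR; rewrite ?nnegrE ?ler0n //; lra.
  rewrite -[c%:R `^ alpha]mulr_powRB1 ?ler0n //; last lra.
  rewrite ler_wpM2l // ; apply: ge0_ler_powR; rewrite ?nnegrE ?ler_nat //; lra.
rewrite ler_wpDl // ler_pdivlMr // /convexity_gain; lra.
Qed.

End PowerCost.

Section Counting.
Context {R : realType}.

(* [covered_gaps n r j] counts the gaps [s + i, s + i + 1], i < n, jumped over
   by an edge of length [r j] leaving the chain point [s + j]. *)
Definition covered_gaps n (r : nat -> R) j : nat :=
  (\sum_(i < n) ((j <= i) && ((i.+1 - j)%:R <= r j)%R))%N.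

Lemma covered_gaps_le n r j : 0 <= r j -> (covered_gaps n r j)%:R <= r j.
Proof.
move=> r0; suff [] : (covered_gaps n r j)%:R <= r j /\ (covered_gaps n r j <= n - j)%N by [].
rewrite /covered_gaps; elim: n => [|n [IHr IHn]]; first by rewrite big_ord0.
rewrite big_ord_recr /=; move: IHr IHn; set k := \sum_(i < n) _ => IHr IHn.
case: andP => [[jn cover]|_] /=; last first.
  by rewrite addn0; split => //; apply: leq_trans IHn (leq_sub2r _ _).
have size_le : (k + 1 <= n.+1 - j)%N.
  by rewrite addn1 subSn.
by split => //; apply: le_trans cover; rewrite ler_nat.
Qed.

Lemma sum_covered_gaps_ge n r :
  (forall i, (i < n)%N -> exists2 j, (j <= i)%N & (i.+1 - j)%:R <= r j) ->
  (n <= \sum_(j < n.+1) covered_gaps n r j)%N.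
Proof.
move=> covered; rewrite /covered_gaps exchange_big /= -[X in (X <= _)%N]card_ord.
rewrite -sum1_card; apply: leq_sum => i _; have [j ji cover] := covered i (ltn_ord i).
have jn : (j < n.+1)%N by rewrite ltnS (leq_trans ji) // ltnW.
by rewrite (bigD1 (Ordinal jn)) //= ji cover.
Qed.

Lemma sum_le_card_excess {I : finType} {D : {pred I}} {c f g : I -> R} {d : R} :
  0 < d -> (forall i, c i <= f i) -> (forall i, c i <= 1 + (f i - c i) / d) ->
  (forall i, i \notin D -> f i = g i) ->
  \sum_i c i <= #|D|%:R + (\sum_i f i - \sum_i c i) / d + \sum_(i | i \notin D) g i.
Proof.
move=> d0 le_cf le_cexcess unchanged.
have excess0 i : 0 <= (f i - c i) / d by rewrite divr_ge0 ?subr_ge0 // ltW.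
rewrite -sumrB mulr_suml [\sum_i c i](bigID (mem D)) [\sum_i (_ / d)](bigID (mem D)) /=.
apply: le_trans (_ : \sum_(i in D) (1 + (f i - c i) / d) +
  \sum_(i | i \notin D) ((f i - c i) / d + g i) <= _).
  apply: lerD; apply: ler_sum => i Di //.
  by rewrite -unchanged // ler_wpDl.
rewrite !big_split /= sumr_const; lra.
Qed.

End Counting.

Section Chain.
Context {R : realType} (s : R).

Fixpoint chain (n : nat) : {fset R} :=
  if n is m.+1 then (s + n%:R) |` chain m else [fset s].

Lemma mem_chain n x : x \in chain n <-> exists2 i, (i <= n)%N & x = s + i%:R.
Proof.
elim: n x => [|n IH] x /=.
  rewrite in_fset1; split => [/eqP ->|[i]]; first by exists 0%N; rewrite ?addr0.
  by rewrite leqn0 => /eqP -> ->; rewrite addr0.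
rewrite !inE; split.
  by case/orP => [/eqP ->|/IH [i le_in ->]]; [exists n.+1 | exists i => //; apply: leqW].
case=> i; rewrite leq_eqVlt => /orP [/eqP -> ->|le_in ->]; first by rewrite eqxx.
by apply/orP; right; apply/IH; exists i.
Qed.

Lemma chain_nat {n i} : (i <= n)%N -> s + i%:R \in chain n.
Proof. by move=> le_in; apply/mem_chain; exists i. Qed.

Lemma chain_source n : s \in chain n.
Proof. by apply/mem_chain; exists 0%N; rewrite ?addr0. Qed.

Lemma chain_next_notin n : s + n.+1%:R \notin chain n.
Proof.
apply/negP => /mem_chain [i le_in /eqP]; rewrite (inj_eq (addrI s)) eqr_nat => /eqP in_eq.
by move: le_in; rewrite -in_eq ltnn.
Qed.

Lemma chain_mirror_notin {n} : (0 < n)%N -> s - n%:R \notin chain n.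
Proof.
move=> n0; apply/negP => /mem_chain [i _ /eqP]; rewrite -subr_eq0.
have -> : s - n%:R - (s + i%:R) = - (n + i)%:R by rewrite natrD; lra.
by rewrite oppr_eq0 pnatr_eq0 addn_eq0 (gtn_eqF n0).
Qed.

Lemma big_chain n (F : R -> R) :
  \sum_(p <- chain n) F p = \sum_(i < n.+1) F (s + i%:R).
Proof.
elim: n => [|n IH] /=; first by rewrite big_seq_fset1 big_ord1 addr0.
by rewrite big_fsetU1 ?chain_next_notin // IH [in RHS]big_ord_recr /= addrC.
Qed.

Lemma OPT_le_cost (alpha : R) P rho : feasible s P rho -> OPT s alpha P <= cost alpha P rho.
Proof.
move=> feas; apply: ge_inf; last by exists rho.
by exists 0 => _ [r _ <-]; apply: sumr_ge0 => p _; exact: powR_ge0.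
Qed.

Lemma OPT_chain (alpha : R) n : alpha != 0 -> OPT s alpha (chain n) <= n%:R.
Proof.
move=> a0; pose rho p : R := if (p \in chain n) && (p != s + n%:R) then 1 else 0.
have -> : n%:R = cost alpha (chain n) rho.
  rewrite /cost big_chain big_ord_recr /= /rho eqxx andbF powR0 // addr0.
  rewrite (eq_bigr (fun _ => 1)) ?sumr_const ?card_ord // => i _.
  rewrite chain_nat 1?ltnW // (inj_eq (addrI s)) eqr_nat neq_ltn ltn_ord.
  by rewrite powR1.
apply: OPT_le_cost; split.
  by split => [p|p /negbTE p_out]; rewrite /rho ?p_out //; case: ifP.
exists (fun p => p - 1); split => p /mem_chain [i le_in ->].
  move=> not_source; have i0 : (0 < i)%N.
    by rewrite lt0n; apply: contra not_source => /eqP ->; rewrite addr0.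
  have -> : s + i%:R - 1 = s + i.-1%:R by rewrite -{1}(prednK i0) -addn1 natrD; lra.
  rewrite chain_nat ?(leq_trans (leq_pred i)) //; split => //.
  rewrite /rho chain_nat ?(leq_trans (leq_pred i)) // (inj_eq (addrI s)) eqr_nat.
  rewrite neq_ltn (leq_trans _ le_in) ?prednK //=.
  have -> : s + i.-1%:R - (s + i%:R) = -1 by rewrite -{2}(prednK i0) -addn1 natrD; lra.
  by rewrite normrN normr1.
exists i; elim: i {le_in} => [|i IH]; first by rewrite addr0.
by rewrite iterSr -{2}IH -addn1 natrD addrA addrK.
Qed.

Lemma OPT_star (alpha : R) n : alpha != 0 -> (0 < n)%N ->
  OPT s alpha ((s - n%:R) |` chain n) <= n%:R `^ alpha.
Proof.
move=> a0 n0; pose rho p : R := if p == s then n%:R else 0.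
have s_chain := chain_source n.
have -> : n%:R `^ alpha = cost alpha ((s - n%:R) |` chain n) rho.
  rewrite /cost big_fsetU1 ?chain_mirror_notin // big_chain big_ord_recl /= addr0.
  have shifted k : (s + k%:R == s) = (k == 0%N).
    by rewrite -subr_eq0 addrAC subrr add0r pnatr_eq0.
  have mirror_ne : (s - n%:R == s) = false.
    by rewrite -subr_eq0 addrAC subrr add0r oppr_eq0 pnatr_eq0 (gtn_eqF n0).
  rewrite /rho eqxx mirror_ne powR0 // add0r big1 ?addr0 // => i _.
  by rewrite shifted powR0.
apply: OPT_le_cost; split.
  split => [p|p]; rewrite /rho; first by case: ifP.
  by case: eqP => // ->; rewrite in_fsetU s_chain orbT.
exists (fun _ => s); split => [p pP _|p _]; last by exists 1%N.
split; first by rewrite in_fsetU s_chain orbT.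
rewrite /rho eqxx; move: pP; rewrite in_fsetU in_fset1.
case/orP => [/eqP ->|/mem_chain [i le_in ->]].
  by rewrite opprB addrC subrK normr_nat.
by rewrite opprD addNKr normrN normr_nat ler_nat.
Qed.

Lemma arborescence_parent {P rho x} : has_arborescence s P rho -> x \in P -> x != s ->
  exists p, [/\ p \in P, p != x & `|p - x| <= rho p].
Proof.
case=> par [par_edge par_root] xP xs; have [pxP edge] := par_edge _ xP xs.
exists (par x); split => //; apply: contra xs => /eqP fixed.
have iter_fixed m : iter m par x = x by elim: m => //= m ->.
by have [m <-] := par_root _ xP; rewrite iter_fixed.
Qed.

Lemma chain_gap_covered {n rho} : has_arborescence s (chain n) rho ->
  forall i, (i < n)%N -> exists2 j, (j <= i)%N & (i.+1 - j)%:R <= rho (s + j%:R).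
Proof.
case=> par [par_edge par_root] i lt_in.
have [m] := par_root _ (chain_nat lt_in).
have : s + i%:R < s + i.+1%:R by rewrite ltrD2l ltr_nat.
have : s + i.+1%:R \in chain n by exact: chain_nat.
(* The parent path from s + i + 1 to s steps from some q > s + i to par q <= s + i. *)
elim: m (s + i.+1%:R) => [|m IH] q qP iq.
  by move=> /= qs; move: iq; rewrite qs gtrDl ltNge ler0n.
rewrite iterSr => root_q.
have qs : q != s by apply: contraTneq iq => ->; rewrite gtrDl ltNge ler0n.
have [pqP edge] := par_edge _ qP qs.
have [iq'|] := ltP (s + i%:R) (par q); first exact: IH _ pqP iq' root_q.
move: qP pqP edge iq => /mem_chain [k _ ->] /mem_chain [j _ ->] edge.
rewrite ltrD2l ltr_nat lerD2l ler_nat => ik ji.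
exists j => //; apply: le_trans edge.
have -> : s + j%:R - (s + k%:R) = - (k - j)%:R.
  by rewrite natrB ?(leq_trans ji (ltnW ik)) //; lra.
by rewrite normrN normr_nat ler_nat leq_sub2r.
Qed.

Lemma card_chain_indices_le n (E : {fset R}) :
  (#|[pred j : 'I_n.+1 | (s + j%:R)%R \in E]| <= #|` E|)%N.
Proof.
have shift_inj : injective (fun j : 'I_n.+1 => s + j%:R).
  by move=> i j /addrI /eqP; rewrite eqr_nat => /eqP /val_inj.
rewrite -card_finset card_imfset // -(card_imfset imfset_key _ shift_inj).
by apply: fsubset_leq_card; apply/fsubsetP => _ /imfsetP [j /= Ej ->].
Qed.

Lemma assignment_tradeoff {alpha eps : R} {K n : nat} {rho rho' : R -> R} :
  1 < alpha -> (0 < n)%N ->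
  feasible s (chain n) rho -> cost alpha (chain n) rho <= (1 + eps) * n%:R ->
  feasible s ((s - n%:R) |` chain n) rho' ->
  cost alpha ((s - n%:R) |` chain n) rho' <= (1 + eps) * n%:R `^ alpha ->
  modifies_at_most K rho rho' ->
  n%:R <= K.+1%:R + eps * n%:R / convexity_gain alpha + eps * n%:R `^ alpha.
Proof.
move=> a1 n0 [[rho_ge0 _] arb] cost_rho [[rho'_ge0 _] arb'] cost_rho' [D [card_D unchanged]].
have d0 := convexity_gain_gt0 _ a1.
have mirror_notin := chain_mirror_notin n0.
have mirror_ne : s - n%:R != s.
  by apply: contraNneq mirror_notin => ->; apply: chain_source.
have [p [pP' p_ne edge]] := arborescence_parent arb' (fset1U1 _ _) mirror_ne.
have : p \in chain n by move: pP'; rewrite in_fsetU in_fset1 (negbTE p_ne).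
case/mem_chain => jp jp_le p_eq; pose jq : 'I_n.+1 := Ordinal (jp_le : (jp < n.+1)%N).
have far : n%:R `^ alpha <= rho' p `^ alpha.
  apply: ge0_ler_powR; rewrite ?nnegrE ?ler0n //; first lra.
  apply: le_trans edge; rewrite p_eq.
  have -> : s + jp%:R - (s - n%:R) = (jp + n)%:R by rewrite natrD; lra.
  by rewrite normr_nat ler_nat leq_addl.
pose r j := rho (s + j%:R).
pose c (j : 'I_n.+1) : R := (covered_gaps n r j)%:R.
pose f (j : 'I_n.+1) := r j `^ alpha.
pose g (j : 'I_n.+1) := rho' (s + j%:R) `^ alpha.
pose changed := [pred j : 'I_n.+1 | (s + j%:R)%R \in p |` D].
have le_cf j : c j <= f j.
  by rewrite /c /f; apply: natr_le_powR (ltW a1) _; apply/covered_gaps_le/rho_ge0.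
have le_c_excess j : c j <= 1 + (f j - c j) / convexity_gain alpha.
  by rewrite /c /f; apply: natr_le_cost_excess => //; apply/covered_gaps_le/rho_ge0.
have same j : j \notin changed -> f j = g j.
  by rewrite inE in_fsetU negb_or => /andP [_ /unchanged]; rewrite /f /g /r => ->.
have budget := sum_le_card_excess d0 le_cf le_c_excess same.
have sum_c : n%:R <= \sum_j c j.
  by rewrite -natr_sum ler_nat; apply: sum_covered_gaps_ge; apply: chain_gap_covered.
have card_changed : #|changed|%:R <= K.+1%:R :> R.
  rewrite ler_nat; apply: leq_trans (card_chain_indices_le _ _) _.
  by rewrite cardfsU1; apply: (leq_add (leq_b1 _) card_D).
have sum_f : \sum_j f j <= (1 + eps) * n%:R by rewrite /cost big_chain in cost_rho.
have sum_g : g jq + \sum_(j | j \notin changed) g j <= (1 + eps) * n%:R `^ alpha.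
  apply: le_trans cost_rho'; rewrite /cost big_fsetU1 // big_chain.
  rewrite [X in _ <= _ + X](bigID (mem changed)) /= addrA lerD2r.
  rewrite (bigD1 jq) /=; last by rewrite inE p_eq fset1U1.
  have := powR_ge0 (rho' (s - n%:R)) alpha.
  have : 0 <= \sum_(i in changed | i != jq) g i by apply: sumr_ge0 => i _; apply: powR_ge0.
  rewrite /g /=; lra.
have excess :
    (\sum_j f j - \sum_j c j) / convexity_gain alpha <= eps * n%:R / convexity_gain alpha.
  by rewrite ler_pM2r ?invr_gt0 //; lra.
have : n%:R `^ alpha <= g jq by rewrite /g /= -p_eq.
lra.
Qed.

Lemma reachable_chain (Ae : update_algorithm R) m : exists rho, reachable s Ae (chain m) rho.
Proof.
elim: m => [|m [rho reach]]; first by exists (fun _ => 0); exact: reach_init.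
by eexists; exact: (@reach_step _ _ _ _ _ (Ins _) reach (chain_next_notin m)).
Qed.

Lemma stable_approx_tradeoff {alpha eps : R} {K n : nat} {Ae : update_algorithm R} :
  1 < alpha -> 0 < eps -> (0 < n)%N -> stable_approx s alpha eps K Ae ->
  n%:R <= K.+1%:R + eps * n%:R / convexity_gain alpha + eps * n%:R `^ alpha.
Proof.
move=> a1 e0 n0 stable; have a0 : alpha != 0 by rewrite gt_eqF // (lt_trans ltr01).
have scale (x y : R) : x <= y -> (1 + eps) * x <= (1 + eps) * y.
  by apply: ler_wpM2l; lra.
case: n n0 => // m _; have [rho reach] := reachable_chain Ae m.
have grow := chain_next_notin m.
have [feas1 _ cost1] := stable _ _ (Ins (s + m.+1%:R)) reach grow.
have reach' := @reach_step _ _ _ _ _ (Ins _) reach grow.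
have [feas2 changes cost2] :=
  stable _ _ (Ins (s - m.+1%:R)) reach' (chain_mirror_notin (ltn0Sn m)).
apply: (assignment_tradeoff a1 (ltn0Sn m) feas1 _ feas2 _ changes).
  exact: le_trans cost1 (scale _ _ (OPT_chain _ m.+1 a0)).
exact: le_trans cost2 (scale _ _ (OPT_star _ m.+1 a0 (ltn0Sn m))).
Qed.

End Chain.

Lemma stability_ge_of_tradeoff {R : realType} {alpha eps d : R} {K : nat} :
  1 < alpha -> 0 < d -> 0 < eps -> 4 * eps <= d -> 4 * 6 `^ (alpha - 1) * eps <= 1 ->
  (forall n, (0 < n)%N -> n%:R <= K.+1%:R + eps * n%:R / d + eps * n%:R `^ alpha) ->
  ((4 * eps)^-1) `^ (alpha - 1)^-1 / 4 <= K%:R.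
Proof.
move=> a1 d0 e0 e_d e_6 tradeoff.
have aE : (alpha - 1) * (alpha - 1)^-1 = 1 by rewrite mulfV // subr_eq0 gt_eqF.
have inv_ge0 : 0 <= (4 * eps)^-1 by rewrite invr_ge0 mulr_ge0 // ltW.
set x := _ `^ (alpha - 1)^-1.
have x0 : 0 <= x by exact: powR_ge0.
have xE : x `^ (alpha - 1) = (4 * eps)^-1.
  by rewrite -powRrM mulVf ?powRr1 // subr_eq0 gt_eqF.
have six_le : 6 <= x.
  have six_pow : 0 < 6 `^ (alpha - 1) :> R by exact: powR_gt0.
  have -> : 6 = (6 `^ (alpha - 1)) `^ (alpha - 1)^-1 :> R.
    by rewrite -powRrM aE powRr1.
  apply: ge0_ler_powR; rewrite ?nnegrE ?powR_ge0 //; first by rewrite invr_ge0 subr_ge0 ltW.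
  by rewrite -[(4 * eps)^-1]mul1r ler_pdivlMr ?mulr_gt0 //; nra.
set n := Num.truncn x.
have /andP [n_le lt_n1] := truncn_itv x0; rewrite -natr1 in lt_n1.
have n0 : (0 < n)%N by rewrite -(ltr_nat R); lra.
have n_pow : n%:R `^ (alpha - 1) <= (4 * eps)^-1.
  by rewrite -xE; apply: ge0_ler_powR; rewrite ?nnegrE ?ler0n // subr_ge0 ltW.
have far_share : eps * n%:R `^ alpha <= n%:R / 4.
  rewrite -mulr_powRB1 ?ler0n //; last exact: lt_trans ltr01 a1.
  apply: le_trans (_ : eps * (n%:R * (4 * eps)^-1) <= _).
    by apply: ler_wpM2l; [exact: ltW | apply: ler_wpM2l; [exact: ler0n | exact: n_pow]].
  by rewrite le_eqVlt; apply/orP; left; apply/eqP; field; rewrite gt_eqF.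
have chain_share : eps * n%:R / d <= n%:R / 4.
  by rewrite mulrAC mulrC ler_wpM2l ?ler0n // ler_pdivrMr //; lra.
have := tradeoff n n0; lra.
Qed.

Theorem theorem4 (R : realType) (alpha : R) (halpha : 1 < alpha)
    (s : R) (A : R -> update_algorithm R) (k : R -> nat) :
  SAS s alpha A k ->
  exists c : R, 0 < c /\ exists eps0 : R, 0 < eps0 /\
    forall eps : R, 0 < eps -> eps < eps0 ->
      c * (eps^-1) `^ ((alpha - 1)^-1) <= (k eps)%:R.
Proof.
move=> sas; have d0 := convexity_gain_gt0 _ halpha.
have four_pow : 0 < 4 `^ (alpha - 1)^-1 :> R by exact: powR_gt0.
exists ((4 `^ (alpha - 1)^-1)^-1 / 4); split; first by rewrite divr_gt0 ?invr_gt0.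
exists (Num.min (convexity_gain alpha / 4) (4 * 6 `^ (alpha - 1))^-1); split.
  by rewrite lt_min divr_gt0 ?invr_gt0 ?mulr_gt0.
move=> eps e0; rewrite lt_min => /andP [e_d e_6].
have eps_six : 4 * 6 `^ (alpha - 1) * eps <= 1.
  by rewrite mulrC -ler_pdivlMr ?mulr_gt0 // mul1r ltW.
have eps_gain : 4 * eps <= convexity_gain alpha by rewrite ltr_pdivlMr in e_d; lra.
suff -> : (4 `^ (alpha - 1)^-1)^-1 / 4 * eps^-1 `^ (alpha - 1)^-1 =
    (4 * eps)^-1 `^ (alpha - 1)^-1 / 4.
  exact: stability_ge_of_tradeoff halpha d0 e0 eps_gain eps_six
    (fun n n0 => stable_approx_tradeoff s halpha e0 n0 (sas eps e0)).
have -> : eps^-1 = 4 * (4 * eps)^-1 by rewrite invfM mulrA mulfV // mul1r.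
rewrite powRM ?invr_ge0 ?mulr_ge0 ?ltW //.
by field; rewrite gt_eqF.
Qed.
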